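(* Let $r,i\in\mathbb{Z}$ and $\beta\in\Bbbk^*$ with $\beta^n\ne1$. Then $c_\beta^{r,i}(k,0)\ne0$ for all $0\le k\le n$, and $c_\beta^{r,i}(n,l)=0$ for all $1\le l\le n-1$. (Equivalently: in the lower triangular matrix $\mathcal{A}_\beta^{r,i}(n)=(c_\beta^{r,i}(k,l))_{0\le l\le k\le n}$, all first-column entries are nonzero and the last row is zero except for its first and last entries.)
   Context: $\Bbbk$ is an algebraically closed field of characteristic $0$; $n,w$ positive integers, $\gamma$ a primitive $n$-th root of unity. $H=B(n,w,\gamma)$ is the Hopf algebra generated by $x^{\pm1},g,y$ with relations $xx^{-1}=x^{-1}x=1$, $xg=gx$, $xy=yx$, $yg=\gamma gy$, $y^n=1-x^w=1-g^n$, with $\Delta(y)=y\otimes g+1\otimes y$, $x,g$ group-like, $S(x)=x^{-1}$, $S(g)=g^{-1}$, $S(y)=-yg^{-1}$. The elements $c_\beta^{r,i}(k,l)\in H$ ($0\le l\le k$) are defined by $c_\beta^{r,i}(0,0)=x^rg^i$ and, for $k\ge0$: $c_\beta^{r,i}(k+1,0)=c_\beta^{r,i}(k,0)S(y)+\beta yc_\beta^{r,i}(k,0)S(g)$; for $0<l<k+1$, $c_\beta^{r,i}(k+1,l)=c_\beta^{r,i}(k,l)S(y)+\beta\gamma^{-l}yc_\beta^{r,i}(k,l)S(g)+c_\beta^{r,i}(k,l-1)S(g)$; $c_\beta^{r,i}(k+1,k+1)=c_\beta^{r,i}(k,k)S(g)$. *)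

From HB Require Import structures.
From mathcomp Require Import all_boot all_order all_algebra.
Set Implicit Arguments. Unset Strict Implicit. Unset Printing Implicit Defensive.
Import Order.TTheory GRing.Theory Num.Theory.
Local Open Scope ring_scope.

Definition B_rels (k : fieldType) (n w : nat) (gam : k) (A : algType k)
    (x xi g y : A) : Prop :=
  x * xi = 1 /\ xi * x = 1 /\ x * g = g * x /\ x * y = y * x /\
  y * g = gam *: (g * y) /\
  y ^+ n = 1 - x ^+ w /\ 1 - x ^+ w = 1 - g ^+ n.

Definition is_B_presentation (k : fieldType) (n w : nat) (gam : k)
    (A : algType k) (x xi g y : A) : Prop :=
  B_rels n w gam x xi g y /\
  forall (B : algType k) (x' xi' g' y' : B),
    B_rels n w gam x' xi' g' y' ->
    (exists f : {lrmorphism A -> B},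
        [/\ f x = x', f xi = xi', f g = g' & f y = y']) /\
    (forall f1 f2 : {lrmorphism A -> B},
        f1 x = f2 x -> f1 xi = f2 xi -> f1 g = f2 g -> f1 y = f2 y ->
        f1 =1 f2).

(* Antipode values on generators: S(y) = - y g^{-1}, S(g) = g^{-1}. *)
Definition S_y (k : fieldType) (A : unitAlgType k) (g y : A) : A := - (y * g^-1).
Definition S_g (k : fieldType) (A : unitAlgType k) (g : A) : A := g^-1.

(* c_beta^{r,i}(k,l); the value is set to 0 outside the range 0 <= l <= k. *)
Fixpoint cb (k : fieldType) (gam : k) (A : unitAlgType k) (x g y : A)
    (r i : int) (beta : k) (kk : nat) (l : nat) {struct kk} : A :=
  match kk with
  | 0%N => if l == 0%N then x ^ r * g ^ i else 0
  | kk'.+1 =>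
      let c := cb gam x g y r i beta kk' in
      if l == 0%N then
        c 0%N * S_y g y + beta *: (y * c 0%N * S_g g)
      else if (l < kk'.+1)%N then
        c l * S_y g y + (beta * gam ^- l) *: (y * c l * S_g g)
          + c l.-1 * S_g g
      else if l == kk'.+1 then c kk' * S_g g
      else 0
  end.

(* Since y (x^r g^i) = gam^i (x^r g^i) y and g^-1 y = gam y g^-1, every
   c(k,l) is a scalar multiple of the monomial x^r g^i y^(k-l) g^-k.  With
   b = beta gam^i the scalars satisfy a q-Pascal recursion, solved by a Gaussian
   binomial coefficient in gam^-1 times prod_(l <= t < k) (b - gam^t).  The
   first column is therefore prod_(t < k) (b - gam^t), nonzero because
   b^n = beta^n != 1, while [n choose l] vanishes at a primitive n-th root of
   unity for 0 < l < n.  The monomials are nonzero because y^n = 1 - x^w, and a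
   clock-and-shift matrix representation of B(n,w,gam) shows 1 - x^w != 0. *)

From HB Require Import structures.
From mathcomp Require Import all_boot all_order all_algebra all_fingroup ring.
Import Order.TTheory GRing.Theory Num.Theory.
Set Implicit Arguments. Unset Strict Implicit. Unset Printing Implicit Defensive.
Local Open Scope ring_scope.

Section Coefficients.
Variables (K : fieldType) (gam b : K).

(* c(k,l) = cb_coef k l *: x^r g^i y^(k-l) g^-k, where b = beta gam^i. *)
Fixpoint cb_coef (k l : nat) : K :=
  match k with
  | 0%N => (l == 0%N)%:R
  | k'.+1 =>
    if l == 0%N then (b - gam ^+ k') * cb_coef k' 0
    else if (l < k'.+1)%N then
      (b * gam ^- l - gam ^+ k') * cb_coef k' l + cb_coef k' l.-1
    else if l == k'.+1 then cb_coef k' k' else 0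
  end.

(* [qfall k l / qfact l] is the Gaussian binomial [k choose l] at gam^-1. *)
Definition qfact l : K := \prod_(j < l) (1 - gam ^- j.+1).
Definition qfall k l : K := \prod_(j < l) (1 - gam ^- (k - j)).
Definition bprod l k : K := \prod_(l <= t < k) (b - gam ^+ t).

Lemma qfactS l : qfact l.+1 = qfact l * (1 - gam ^- l.+1).
Proof. by rewrite /qfact big_ord_recr. Qed.

Lemma qfallSr k l : qfall k l.+1 = qfall k l * (1 - gam ^- (k - l)).
Proof. by rewrite /qfall big_ord_recr. Qed.

Lemma qfallSS k l : qfall k.+1 l.+1 = (1 - gam ^- k.+1) * qfall k l.
Proof. by rewrite /qfall big_ord_recl subn0; congr (_ * _); apply: eq_bigr. Qed.

Lemma qfall_gt k l : (k < l)%N -> qfall k l = 0.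
Proof.
move=> lt_kl; apply/eqP/prodf_eq0; exists (Ordinal lt_kl) => //=.
by rewrite subnn expr0 invr1 subrr.
Qed.

Lemma bprodSl l k : (l < k)%N -> bprod l k = (b - gam ^+ l) * bprod l.+1 k.
Proof. by move=> lt_lk; rewrite /bprod big_ltn. Qed.

Lemma bprodSr l k : (l <= k)%N -> bprod l k.+1 = bprod l k * (b - gam ^+ k).
Proof. by move=> le_lk; rewrite /bprod big_nat_recr. Qed.

Hypothesis gam_neq0 : gam != 0.

Lemma qpascal l m :
  (b * gam ^- l.+1 - gam ^+ (l + m)) * (1 - gam ^- m)
    + (1 - gam ^- l.+1) * (b - gam ^+ l)
  = (1 - gam ^- (l + m).+1) * (b - gam ^+ (l + m)).
Proof.
have gl : gam ^+ l != 0 by rewrite expf_neq0.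
have gm : gam ^+ m != 0 by rewrite expf_neq0.
rewrite -addSn !exprS !exprD; field.
by rewrite gl gm gam_neq0.
Qed.

Lemma cb_coef_closed k l : cb_coef k l * qfact l = qfall k l * bprod l k.
Proof.
elim: k l => [|k IH] [|l] /=.
- by rewrite /qfact /qfall /bprod !big_ord0 big_geq // mulr1.
- by rewrite qfall_gt // !mul0r.
- have := IH 0%N; rewrite /qfact /qfall !big_ord0 !mul1r !mulr1 => ->.
  by rewrite bprodSr // mulrC.
case: (ltngtP l k) => [lt_lk | lt_kl | ->]; rewrite ?ltnS.
- rewrite lt_lk mulrDl -mulrA IH qfactS [cb_coef k l * _]mulrA IH.
  rewrite (qfallSr k l) (bprodSl lt_lk) qfallSS (bprodSr lt_lk).
  have [m ->] : exists m, k = (l + m)%N by exists (k - l)%N; rewrite subnKC // ltnW.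
  rewrite addKn; move: (qfall _ l) (bprod l.+1 _) => R P.
  transitivity (R * P * ((1 - gam ^- (l + m).+1) * (b - gam ^+ (l + m)))).
    by rewrite -qpascal; ring.
  by ring.
- by rewrite ltnNge (ltnW lt_kl) /= eqSS gtn_eqF // qfall_gt ?mul0r // ltnS.
- by rewrite ltnn eqxx qfallSS qfactS mulrA IH /bprod !big_geq // !mulr1 mulrC.
Qed.

Lemma cb_coef_col0 k : cb_coef k 0 = bprod 0 k.
Proof. by have := cb_coef_closed k 0; rewrite /qfact /qfall !big_ord0 mulr1 mul1r. Qed.

End Coefficients.

Section QCommutation.
Variables (K : fieldType) (A : unitAlgType K) (q : K) (a c : A).
Hypothesis qcomm : c * a = q *: (a * c).

Lemma qcommXn m : c * a ^+ m = q ^+ m *: (a ^+ m * c).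
Proof.
elim: m => [|m IH]; first by rewrite !expr0 mulr1 mul1r scale1r.
by rewrite !exprSr mulrA IH -scalerAl -[_ * c * a]mulrA qcomm -scalerAr scalerA mulrA.
Qed.

Hypotheses (a_unit : a \is a GRing.unit) (q_neq0 : q != 0).

Lemma qcommV : c * a^-1 = q^-1 *: (a^-1 * c).
Proof.
apply: (scalerI q_neq0); rewrite scalerA mulfV // scale1r.
by rewrite -{2}[c](mulrK a_unit) qcomm -scalerAl -scalerAr mulrA mulKr.
Qed.

End QCommutation.

Lemma qcommXz (K : fieldType) (A : unitAlgType K) (q : K) (a c : A) (z : int) :
    c * a = q *: (a * c) -> a \is a GRing.unit -> q != 0 ->
  c * a ^ z = q ^ z *: (a ^ z * c).
Proof.
move=> qcomm a_unit q_neq0; case: z => m; first by rewrite -!exprnP (qcommXn qcomm).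
by rewrite !NegzE -!exprnN -!exprVn (qcommXn (qcommV qcomm a_unit q_neq0)).
Qed.

Section Monomials.
Variables (K : fieldType) (gam : K) (A : unitAlgType K) (x g y : A).
Hypotheses (gam_neq0 : gam != 0) (g_unit : g \is a GRing.unit).
Hypotheses (xy : x * y = y * x) (yg : y * g = gam *: (g * y)).
Variables (r i : int) (beta : K).

Definition cb_mono m k := x ^ r * g ^ i * y ^+ m * g^-1 ^+ k.

Lemma y_xg : y * (x ^ r * g ^ i) = gam ^ i *: (x ^ r * g ^ i * y).
Proof.
have cxy : GRing.comm y (x ^ r) by apply: commrXz.
by rewrite mulrA cxy -mulrA (qcommXz _ yg g_unit gam_neq0) -scalerAr mulrA.
Qed.

Lemma gVn_y k : g^-1 ^+ k * y = gam ^+ k *: (y * g^-1 ^+ k).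
Proof.
by rewrite (qcommXn (qcommV yg g_unit gam_neq0)) scalerA -exprMn mulfV // expr1n scale1r.
Qed.

Lemma cb_mono_Sy m k :
  cb_mono m k * S_y g y = - (gam ^+ k *: cb_mono m.+1 k.+1).
Proof.
rewrite /S_y /cb_mono mulrN !mulrA -(mulrA _ (g^-1 ^+ k)) gVn_y.
by rewrite -scalerAr -scalerAl -!mulrA -exprSr [y ^+ m * _]mulrA -exprSr.
Qed.

Lemma y_cb_mono_Sg m k :
  y * cb_mono m k * S_g g = gam ^ i *: cb_mono m.+1 k.+1.
Proof.
rewrite /S_g /cb_mono 2!(mulrA y) y_xg -!scalerAl.
by rewrite -(mulrA _ y) -exprS -(mulrA _ (g^-1 ^+ k)) -exprSr.
Qed.

Lemma cb_mono_Sg m k : cb_mono m k * S_g g = cb_mono m k.+1.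
Proof. by rewrite /S_g /cb_mono -mulrA -exprSr. Qed.

Lemma cb_expand kk l : cb gam x g y r i beta kk l =
  if (l <= kk)%N then cb_coef gam (beta * gam ^ i) kk l *: cb_mono (kk - l) kk
  else 0.
Proof.
elim: kk l => [|kk IH] [|l] //=.
- by rewrite /cb_mono !expr0 !mulr1 scale1r.
- rewrite IH -scalerAl cb_mono_Sy -!scalerAr -scalerAl y_cb_mono_Sg.
  by rewrite -scaleNr !scalerA -scalerDl !subn0; congr (_ *: _); ring.
rewrite ltnS; case: ltngtP => [lt_lk | lt_kl | ->].
- rewrite !IH lt_lk (ltnW lt_lk) -!scalerAl cb_mono_Sy -!scalerAr -scalerAl.
  rewrite y_cb_mono_Sg cb_mono_Sg subnSK // subSS.
  rewrite scalerN !scalerA -scaleNr -!scalerDl ltnS (ltnW lt_lk).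
  by congr (_ *: _); ring.
- by rewrite ltnNge lt_kl /= eqSS gtn_eqF.
- by rewrite eqxx ltnSn IH leqnn -scalerAl cb_mono_Sg !subnn.
Qed.

Lemma cb_mono_neq0 m k : x \is a GRing.unit -> y ^+ m != 0 -> cb_mono m k != 0.
Proof.
move=> x_unit ym_neq0; rewrite /cb_mono mulIr_eq0; last first.
  by apply/mulIr/unitrX; rewrite unitrV.
by rewrite mulrI_eq0 //; apply/mulrI; rewrite unitrMl ?unitrXz.
Qed.

End Monomials.

Lemma B_rels_scaled (K : fieldType) (n w : nat) (gam : K) (A : algType K)
    (D P : A) (nu lam mu : K) :
    nu != 0 -> lam ^+ n = nu ^+ w -> mu ^+ n = 1 - nu ^+ w ->
    P * D = gam *: (D * P) -> D ^+ n = 1 -> P ^+ n = 1 ->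
  B_rels n w gam nu%:A nu^-1%:A (lam *: D) (mu *: P).
Proof.
move=> nu_neq0 lam_n mu_n PD Dn Pn.
have algX (c : K) m : c%:A ^+ m = (c ^+ m)%:A :> A by rewrite exprZn expr1n.
have algB (c : K) : (1 - c)%:A = 1 - c%:A :> A by rewrite scalerBl scale1r.
split; first by rewrite mulr_algl scalerA mulfV ?scale1r.
split; first by rewrite mulr_algl scalerA mulVf ?scale1r.
split; first exact: comm_alg.
split; first exact: comm_alg.
split.
  rewrite -scalerAl -scalerAr PD -[lam *: D * _]scalerAl -scalerAr !scalerA.
  by congr (_ *: _); ring.
split; first by rewrite exprZn Pn mu_n algB algX.
by rewrite [in RHS]exprZn Dn lam_n algX.
Qed.

Section ClockShift.
Variables (K : fieldType) (n : nat) (gam : K).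
Hypothesis gam_prim : n.+1.-primitive_root gam.

Definition clock_mx : 'M[K]_n.+1 := diag_mx (\row_j gam ^+ j).
Definition shift_perm : 'S_n.+1 := perm (@ordS_inj n.+1).
Definition shift_mx : 'M[K]_n.+1 := perm_mx shift_perm.

Lemma clock_mxX m : clock_mx ^+ m = diag_mx (\row_j (gam ^+ j) ^+ m).
Proof.
elim: m => [|m IH].
  by apply/matrixP => a b; rewrite !mxE expr0; case: eqP.
rewrite exprSr IH -mulmxE mulmx_diag; congr diag_mx.
by apply/matrixP => a b; rewrite !mxE exprSr.
Qed.

Lemma clock_mxXn : clock_mx ^+ n.+1 = 1.
Proof.
rewrite clock_mxX; apply/matrixP => a b.
by rewrite !mxE exprAC (prim_expr_order gam_prim) expr1n; case: eqP.
Qed.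

Lemma shift_permX m (j : 'I_n.+1) :
  val ((shift_perm ^+ m)%g j) = ((j + m) %% n.+1)%N.
Proof.
rewrite permX; elim: m => [|m IH] /=; first by rewrite addn0 modn_small.
by rewrite permE /= IH addnS -addn1 modnDml addn1.
Qed.

Lemma shift_mxX m : shift_mx ^+ m = perm_mx (shift_perm ^+ m)%g.
Proof.
elim: m => [|m IH]; first by rewrite expr0 expg0 perm_mx1.
by rewrite exprSr IH expgSr perm_mxM mulmxE.
Qed.

Lemma shift_mxXn : shift_mx ^+ n.+1 = 1.
Proof.
rewrite shift_mxX.
have -> : (shift_perm ^+ n.+1)%g = 1%g.
  by apply/permP => j; apply: val_inj; rewrite shift_permX perm1 modnDr modn_small.
exact: perm_mx1.
Qed.

Lemma shift_clock_mx : shift_mx * clock_mx = gam *: (clock_mx * shift_mx).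
Proof.
rewrite -!mulmxE mul_mx_diag mul_diag_mx; apply/matrixP => a b.
rewrite !mxE; case: eqP => [<-|_]; last by rewrite mul0r !mulr0.
by rewrite permE /= (prim_expr_mod gam_prim) exprS mulr1 mul1r.
Qed.

End ClockShift.

Lemma closed_field_nth_root (K : closedFieldType) (n : nat) (c : K) :
  (0 < n)%N -> exists z, z ^+ n = c.
Proof.
move=> n_gt0; have /closed_rootP[z] : size ('X^n - c%:P) != 1.
  by rewrite size_XnsubC // eqSS -lt0n.
by rewrite rootE !hornerE subr_eq0 => /eqP; exists z.
Qed.

Lemma B_presentation_nontrivial (K : closedFieldType) (n w : nat) (gam : K)
    (A : algType K) (x xi g y : A) :
    (0 < w)%N -> n.+1.-primitive_root gam ->
    is_B_presentation n.+1 w gam x xi g y -> 1 - x ^+ w != 0.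
Proof.
move=> w_gt0 gam_prim [_ universal].
(* Any nu with nu != 0 and nu^w != 1 will do; closed fields are infinite. *)
have /closed_nonrootP[nu] : 'X * ('X^w - 1) != 0 :> {poly K}.
  by rewrite mulf_neq0 ?polyX_eq0 // -size_poly_eq0 size_Xn_sub_1.
rewrite rootE !hornerE mulf_eq0 negb_or subr_eq0 => /andP[nu_neq0 nuw_neq1].
have [lam lam_n] := closed_field_nth_root (nu ^+ w) (ltn0Sn n).
have [mu mu_n] := closed_field_nth_root (1 - nu ^+ w) (ltn0Sn n).
have rels := B_rels_scaled nu_neq0 lam_n mu_n (shift_clock_mx gam_prim)
  (clock_mxXn gam_prim) (shift_mxXn K n).
have [[f [fx _ _ _]] _] := universal _ _ _ _ _ rels.
apply: contraNneq (oner_neq0 'M[K]_n.+1) => xw1.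
have : f (1 - x ^+ w) = (1 - nu ^+ w)%:A.
  rewrite rmorphB rmorph1 rmorphXn; move: fx => /= ->.
  by rewrite exprZn expr1n scalerBl scale1r.
rewrite xw1 raddf0 => /esym/eqP.
by rewrite scaler_eq0 subr_eq0 eq_sym (negbTE nuw_neq1) /=.
Qed.

Lemma bprod0_neq0 (K : fieldType) (n k : nat) (gam b : K) :
  n.-primitive_root gam -> b ^+ n != 1 -> bprod gam b 0 k != 0.
Proof.
move=> gam_prim bn_neq1; rewrite prodf_seq_neq0; apply/allP => t _ /=.
rewrite subr_eq0; apply: contra bn_neq1 => /eqP ->.
by rewrite exprAC (prim_expr_order gam_prim) expr1n.
Qed.

Lemma cb_coef_last_row (K : fieldType) (n l : nat) (gam b : K) :
  n.-primitive_root gam -> (0 < l < n)%N -> cb_coef gam b n l = 0.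
Proof.
move=> gam_prim /andP[l_gt0 lt_ln].
have gam_neq0 : gam != 0 by rewrite (prim_root_eq0 gam_prim) -lt0n (ltn_trans l_gt0).
have qfact_neq0 : qfact gam l != 0.
  apply/prodf_neq0 => j _; rewrite subr_eq0 eq_sym invr_eq1.
  by rewrite -(prim_order_dvd gam_prim) gtnNdvd // (leq_ltn_trans (ltn_ord j)).
have qfall0 : qfall gam n l = 0.
  apply/eqP/prodf_eq0; exists (Ordinal l_gt0) => //=.
  by rewrite subn0 (prim_expr_order gam_prim) invr1 subrr.
have /eqP := cb_coef_closed b gam_neq0 n l.
by rewrite qfall0 mul0r mulf_eq0 (negbTE qfact_neq0) orbF => /eqP.
Qed.

Theorem lemma3p14 (k : closedFieldType) (hchar : [pchar k] =i pred0)
  (n w : nat) (hn : (0 < n)%N) (hw : (0 < w)%N)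
  (gam : k) (hgam : n.-primitive_root gam)
  (A : unitAlgType k) (x g y : A)
  (hA : is_B_presentation n w gam x x^-1 g y)
  (r i : int) (beta : k) (hb : beta != 0) (hbn : beta ^+ n != 1) :
  (forall kk : nat, (kk <= n)%N -> cb gam x g y r i beta kk 0 != 0) /\
  (forall l : nat, (1 <= l <= n.-1)%N -> cb gam x g y r i beta n l = 0).
Proof.
case: n hn hgam hA hbn => [//|n] _ gam_prim presA bn_neq1.
have xw_neq0 := B_presentation_nontrivial hw gam_prim presA.
case: presA => [[xxV [Vxx [_ [xy [yg [yn xw_gn]]]]]] _].
have x_unit : x \is a GRing.unit by apply/unitrP; exists x^-1.
have g_unit : g \is a GRing.unit.
  by rewrite -(unitrX_pos _ (ltn0Sn n)) -(subrI _ xw_gn) unitrX.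
have gam_neq0 : gam != 0 by rewrite (prim_root_eq0 gam_prim).
have bn : (beta * gam ^ i) ^+ n.+1 = beta ^+ n.+1.
  rewrite exprMn [(gam ^ i) ^+ _]exprnP exprzAC -exprnP.
  by rewrite (prim_expr_order gam_prim) exp1rz mulr1.
split => [kk le_kk_n | l /andP[l_gt0 le_ln]].
all: rewrite (cb_expand gam_neq0 g_unit xy yg).
- rewrite scaler_eq0 negb_or cb_coef_col0 // subn0; apply/andP; split.
    by apply: bprod0_neq0 gam_prim _; rewrite bn.
  apply: cb_mono_neq0 => //; apply: contraNneq xw_neq0 => ykk0.
  by rewrite -yn -(subnKC le_kk_n) exprD ykk0 mul0r.
- by rewrite cb_coef_last_row ?l_gt0 // scale0r if_same.
Qed.
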